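(* Let $1\le b<\frac{n}{2}-1$ and let $T$ be a tree attaining the maximum value of $M_2$ over $\mathcal{CT}^*_{n,b}$. If $T$ contains a pendent vertex adjacent to a branching vertex, then $T$ contains no pendent path of length greater than $2$.
   Context: A chemical tree is a tree with maximum degree at most $4$. A pendent vertex has degree $1$; a branching vertex has degree greater than $2$. A pendent path is a path $u_0\cdots u_r$ ($r\ge1$) with $u_0$ pendent, $u_r$ branching and all internal vertices of degree $2$; its length is $r$. $\mathcal{CT}^*_{n,b}$ is the class of all $n$-vertex chemical trees with exactly $b$ branching vertices. $M_2(G)=\sum_{uv\in E(G)}d_ud_v$, where $d_v$ is the degree of $v$. *)

From mathcomp Require Import all_boot.
Set Implicit Arguments. Unset Strict Implicit. Unset Printing Implicit Defensive.

Definition simple_graph (n : nat) (e : rel 'I_n) : Prop :=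
  symmetric e /\ irreflexive e.

Definition deg (n : nat) (e : rel 'I_n) (v : 'I_n) : nat := #|[pred w | e v w]|.

Definition acyclic (n : nat) (e : rel 'I_n) : Prop :=
  forall c : seq 'I_n, uniq c -> 3 <= size c -> ~~ cycle e c.

Definition connected (n : nat) (e : rel 'I_n) : Prop :=
  forall x y : 'I_n, connect e x y.

Definition is_tree (n : nat) (e : rel 'I_n) : Prop :=
  simple_graph e /\ connected e /\ acyclic e.

Definition in_CTstar (n b : nat) (e : rel 'I_n) : Prop :=
  is_tree e /\ (forall v, deg e v <= 4) /\ #|[pred v | 2 < deg e v]| = b.

Definition M2 (n : nat) (e : rel 'I_n) : nat :=
  \sum_(u : 'I_n) \sum_(v : 'I_n | (u < v) && e u v) deg e u * deg e v.

(* u0 :: p is a pendent path of length size p *)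
Definition pendent_path (n : nat) (e : rel 'I_n) (u0 : 'I_n) (p : seq 'I_n) : Prop :=
  [/\ 1 <= size p, path e u0 p, uniq (u0 :: p), deg e u0 = 1
    & 2 < deg e (last u0 p)] /\
  (* internal vertices u_1 .. u_{r-1} have degree 2 *)
  all (fun w => deg e w == 2) (behead (belast u0 p)).

From mathcomp Require Import all_boot zify.
Set Implicit Arguments. Unset Strict Implicit. Unset Printing Implicit Defensive.

(* Suppose u0 u1 u2 u3 ... is a pendent path of length at least 3 and x is a
   pendent vertex adjacent to a branching vertex v.  Detaching the leaf u0
   from u1 and attaching it to x gives again a chemical tree: u1 drops to
   degree 1 and x rises to degree 2, so no vertex changes its branching
   status.  The only edges whose weight changes are u0u1 (replaced by u0x,
   both of weight 2), u1u2 (losing d(u2) = 2) and xv (gaining d(v) >= 3),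
   so M2 strictly increases, contradicting maximality. *)

Section Neighbours.
Variables (n : nat) (e : rel 'I_n).

Lemma deg_nbrE z s : uniq s -> all (e z) s -> deg e z = size s ->
  forall w, e z w = (w \in s).
Proof.
move=> us sz dz w.
have card_eq : #|s| = #|[pred c | e z c]| by rewrite (card_uniqP us) -dz.
have /(subset_cardP card_eq) eq_s : s \subset [pred c | e z c] by apply/subsetP/allP.
by rewrite eq_s.
Qed.

Lemma leaf_nbrE z y : deg e z = 1 -> e z y -> forall w, e z w = (w == y).
Proof. by move=> dz zy w; rewrite (@deg_nbrE z [:: y]) ?inE //= zy. Qed.

Lemma deg2_nbrE z a c : deg e z = 2 -> e z a -> e z c -> a != c ->
  forall w, e z w = (w == a) || (w == c).
Proof.
move=> dz za zc ac w.
by rewrite (@deg_nbrE z [:: a; c]) ?inE //= ?inE ?andbT ?za ?zc.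
Qed.
End Neighbours.

Section Leaf.
Variables (n : nat) (e : rel 'I_n) (z y : 'I_n).
Hypotheses (sym : symmetric e) (leaf : forall w, e z w = (w == y)).

Lemma leaf_path_end a s : path e a s -> uniq (a :: s) -> z \in a :: s ->
  z = a \/ z = last a s.
Proof.
elim: s a => [|b s IH] a /=; first by move=> _ _; rewrite inE => /eqP; left.
case/andP=> eab pb /andP[na us]; rewrite inE => /predU1P[|zin]; first by left.
case: (IH b pb us zin) => [zb|]; last by right.
case: s {IH} pb us zin na => [|c s] /=; first by right.
case/andP => ebc _ _ _ na; suff ac : a = c by rewrite ac !inE eqxx orbT in na.
by move: eab ebc; rewrite -zb sym !leaf => /eqP-> /eqP->.
Qed.

Lemma leaf_notin_cycle c : uniq c -> 3 <= size c -> cycle e c -> z \notin c.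
Proof.
move=> uc sc cc; apply/negP => /rot_to[i s hr].
have : cycle e (z :: s) by rewrite -hr rot_cycle.
have : uniq (z :: s) by rewrite -hr rot_uniq.
have : 3 <= size (z :: s) by rewrite -hr size_rot.
case: s {c uc sc cc hr} => [|b [|c s]] // _ /= /and4P[_ nbin _ _].
rewrite rcons_path (sym (last c s)) !leaf => /and3P[/eqP zb _ /andP[_ /eqP lz]].
by move: nbin; rewrite zb -lz mem_last.
Qed.

Lemma connect_avoid_leaf (e2 : rel 'I_n) a c :
  {in [pred w | w != z] &, subrel e e2} -> a != z -> c != z ->
  connect e a c -> connect e2 a c.
Proof.
move=> sub az cz /connectP[s /shortenP[s' ps' us' _] lc].
have zout : z \notin a :: s'.
  apply/negP => /(leaf_path_end ps' us') [za|zl].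
    by rewrite za eqxx in az.
  by rewrite lc -zl eqxx in cz.
apply/connectP; exists s' => //; apply: (sub_in_path sub) ps'.
by apply/allP => w win; rewrite inE; apply: contraNneq zout => <-.
Qed.
End Leaf.

Definition reattach (n : nat) (e : rel 'I_n) (z x : 'I_n) : rel 'I_n :=
  fun a c => if a == z then c == x else if c == z then a == x else e a c.

Section Reattach.
Variables (n : nat) (e : rel 'I_n) (z x : 'I_n).
Local Notation e' := (reattach e z x).

Lemma reattach_at w : e' z w = (w == x).
Proof. by rewrite /reattach eqxx. Qed.

Lemma reattach_off a c : a != z -> c != z -> e' a c = e a c.
Proof. by rewrite /reattach => /negbTE-> /negbTE->. Qed.

Lemma reattach_sym : symmetric e -> symmetric e'.
Proof.
move=> sym a c; rewrite /reattach sym.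
by case: (eqVneq a z) => [->|//]; case: (eqVneq c z) => [->|].
Qed.

Lemma reattach_irr : irreflexive e -> z != x -> irreflexive e'.
Proof.
move=> irr zx a; rewrite /reattach irr.
by case: (eqVneq a z) => [->|]; rewrite ?(negbTE zx).
Qed.

Lemma deg_reattach_at : deg e' z = 1.
Proof. by rewrite /deg -(card1 x); apply: eq_card => w; rewrite inE reattach_at. Qed.

Lemma deg_reattach w : w != z -> deg e' w + e w z = deg e w + (w == x).
Proof.
move=> wz.
have off_z : #|[predD1 [pred c | e' w c] & z]| = #|[predD1 [pred c | e w c] & z]|.
  by apply: eq_card => c; rewrite !inE /reattach (negbTE wz); case: (eqVneq c z).
rewrite /deg (cardD1 z) [in RHS](cardD1 z) off_z !inE /reattach (negbTE wz) eqxx.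
by rewrite addnAC [RHS]addnAC (addnC (w == x)).
Qed.

Lemma reattach_tree : is_tree e -> deg e z = 1 -> z != x -> is_tree e'.
Proof.
move=> [[sym irr] [conn acyc]] dz zx.
have /card_gt0P[y zy] : 0 < deg e z by rewrite dz.
have leaf := leaf_nbrE dz zy.
have sub : {in [pred w | w != z] &, subrel e e'}.
  by move=> a c az cz; rewrite reattach_off.
have sub' : {in [pred w | w != z] &, subrel e' e}.
  by move=> a c az cz; rewrite reattach_off.
have sym' := reattach_sym sym.
split; [split|split].
- exact: sym'.
- exact: reattach_irr.
- have conn_off a c : a != z -> c != z -> connect e' a c.
    move=> az cz; exact: (connect_avoid_leaf sym leaf sub az cz (conn a c)).
  have zx_edge : e' z x by rewrite reattach_at.
  have xz_edge : e' x z by rewrite sym'.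
  have xz : x != z by rewrite eq_sym.
  move=> a c; case: (eqVneq a z) => [->|az]; case: (eqVneq c z) => [->|cz].
  + exact: connect0.
  + exact: connect_trans (connect1 zx_edge) (conn_off _ _ xz cz).
  + exact: connect_trans (conn_off _ _ az xz) (connect1 xz_edge).
  + exact: conn_off.
- move=> c uc sc; apply: contraNN (acyc c uc sc) => cc.
  have zout := leaf_notin_cycle sym' (@reattach_at) uc sc cc.
  apply: (sub_in_cycle sub') cc; apply/allP => w wc; rewrite inE.
  by apply: contraNneq zout => <-.
Qed.
End Reattach.

Definition pair_weight (n : nat) (e : rel 'I_n) (pr : 'I_n * 'I_n) : nat :=
  ((pr.1 < pr.2) && e pr.1 pr.2) * (deg e pr.1 * deg e pr.2).

Definition edge_weight (n : nat) (e : rel 'I_n) (a c : 'I_n) : nat :=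
  e a c * (deg e a * deg e c).

Definition both_orders (T : Type) (E : seq (T * T)) : seq (T * T) :=
  flatten [seq [:: pr; (pr.2, pr.1)] | pr <- E].

Section PairWeights.
Variable n : nat.
Implicit Types (e : rel 'I_n) (s E : seq ('I_n * 'I_n)).

Lemma M2_pairE e : M2 e = \sum_pr pair_weight e pr.
Proof.
rewrite /M2; under [LHS]eq_bigr do rewrite big_mkcond /=.
rewrite pair_big; apply: eq_bigr => [[a c]] _ /=.
by rewrite /pair_weight /=; case: ifP; rewrite ?mul1n ?mul0n.
Qed.

Lemma M2_local e1 e2 s : uniq s ->
  (forall pr, pr \notin s -> pair_weight e1 pr = pair_weight e2 pr) ->
  M2 e1 + \sum_(pr <- s) pair_weight e2 pr = M2 e2 + \sum_(pr <- s) pair_weight e1 pr.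
Proof.
move=> us unchanged.
have M2_split e :
    M2 e = \sum_(pr <- s) pair_weight e pr + \sum_(pr | pr \notin s) pair_weight e pr.
  by rewrite M2_pairE (bigID [in s]) /= -big_uniq.
rewrite !M2_split (eq_bigr _ (fun pr => unchanged pr)).
by rewrite addnC addnA [RHS]addnAC.
Qed.

Lemma big_pair_weight_both_orders e E :
  symmetric e -> all (fun pr => pr.1 != pr.2) E ->
  \sum_(pr <- both_orders E) pair_weight e pr = \sum_(pr <- E) edge_weight e pr.1 pr.2.
Proof.
move=> sym; elim: E => [|[a c] E IH] /=; first by rewrite !big_nil.
case/andP=> ac /IH {}IH; rewrite [both_orders _]/= !big_cons addnA IH /=.
congr (_ + _); rewrite /pair_weight /edge_weight /= (sym c a) [deg e c * _]mulnC.
case: (ltngtP a c) => [_|_|/val_inj a_c] /=; rewrite ?addn0 //.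
by rewrite a_c eqxx in ac.
Qed.
End PairWeights.

Section ReattachPendent.
Variables (n : nat) (e : rel 'I_n) (u0 u1 x : 'I_n).
Hypotheses (sym : symmetric e) (du0 : deg e u0 = 1) (e01 : e u0 u1)
  (du1 : deg e u1 = 2) (dx : deg e x = 1) (xu0 : x != u0) (xu1 : x != u1).
Local Notation e' := (reattach e u0 x).

Let u01 : u0 != u1.
Proof. by apply/eqP => u0u1; move: du0; rewrite u0u1 du1. Qed.

Lemma deg_reattach_pendent w :
  deg e' w = if w == u1 then 1 else if w == x then 2 else deg e w.
Proof.
case: (eqVneq w u0) => [->|wu0].
  by rewrite deg_reattach_at (negbTE u01) eq_sym (negbTE xu0).
have := deg_reattach e x wu0; rewrite (sym w u0) (leaf_nbrE du0 e01).
case: (eqVneq w u1) => [->|_].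
  by rewrite eq_sym (negbTE xu1) du1 /= addn1 addn0 => -[].
by have [->|_] := eqVneq w x; rewrite ?dx /= !addn0 // addn1.
Qed.

Lemma reattach_CTstar b : in_CTstar b e -> in_CTstar b e'.
Proof.
move=> [tree [d4 nbr]]; split; [|split].
- by apply: reattach_tree => //; rewrite eq_sym.
- by move=> w; rewrite deg_reattach_pendent; case: ifP => // _; case: ifP.
- rewrite -nbr; apply: eq_card => w; rewrite !inE deg_reattach_pendent.
  case: (eqVneq w u1) => [->|_]; first by rewrite du1.
  by case: (eqVneq w x) => [->|_]; rewrite ?dx.
Qed.

Variables u2 v : 'I_n.
Hypotheses (e12 : e u1 u2) (exv : e x v)
  (u2_new : u2 \notin [:: u0; u1; x]) (v_new : v \notin [:: u0; u1; x]).

Let changed : seq ('I_n * 'I_n) := [:: (u0, u1); (u0, x); (u1, u2); (x, v)].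

Lemma pair_weight_reattach_unchanged pr :
  pr \notin both_orders changed -> pair_weight e pr = pair_weight e' pr.
Proof.
have u0u2 : u0 != u2 by move: u2_new; rewrite !inE eq_sym; case: (u0 == u2).
have sym' := reattach_sym u0 x sym.
have leaf0 := leaf_nbrE du0 e01.
have leafx := leaf_nbrE dx exv.
have nbr1 := deg2_nbrE du1 (etrans (sym u1 u0) e01) e12 u0u2.
case: pr => a c hS; rewrite /pair_weight /=.
have e'E : e' a c = e a c.
  have [a0|a0] := eqVneq a u0.
    subst a; rewrite reattach_at leaf0.
    have [cx|] := eqVneq c x; first by rewrite cx /= !inE eqxx ?orbT in hS.
    by have [c1|//] := eqVneq c u1; rewrite c1 /= !inE eqxx ?orbT in hS.
  have [c0|c0] := eqVneq c u0; last exact: reattach_off.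
  subst c; rewrite sym' reattach_at sym leaf0.
  have [ax|] := eqVneq a x; first by rewrite ax /= !inE eqxx ?orbT in hS.
  by have [a1|//] := eqVneq a u1; rewrite a1 /= !inE eqxx ?orbT in hS.
rewrite e'E; case eac: (e a c); rewrite ?andbF //.
have kept w : w != u1 -> w != x -> deg e' w = deg e w.
  by move=> w1 wx; rewrite deg_reattach_pendent (negbTE w1) (negbTE wx).
rewrite !kept //; apply: contraNneq hS.
- by move=> c1; move: eac; rewrite c1 sym nbr1 => /orP[]/eqP->; rewrite /= !inE eqxx ?orbT.
- by move=> cx; move: eac; rewrite cx sym leafx => /eqP->; rewrite /= !inE eqxx ?orbT.
- by move=> a1; move: eac; rewrite a1 nbr1 => /orP[]/eqP->; rewrite /= !inE eqxx ?orbT.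
- by move=> ax; move: eac; rewrite ax leafx => /eqP->; rewrite /= !inE eqxx ?orbT.
Qed.

Lemma M2_reattach_pendent : M2 e' + deg e u2 = M2 e + deg e v.
Proof.
move: u2_new v_new; rewrite !inE !negb_or => /and3P[u2u0 u2u1 u2x] /and3P[vu0 vu1 vx].
have ne (a c : 'I_n) : a != c -> ((a == c) = false) * ((c == a) = false).
  by move=> /negbTE ac; split; rewrite // eq_sym.
have NE := (ne _ _ u01, ne _ _ xu0, ne _ _ xu1, ne _ _ u2u0, ne _ _ u2u1, ne _ _ u2x,
  ne _ _ vu0, ne _ _ vu1, ne _ _ vx).
have uniq_changed : uniq (both_orders changed) by rewrite /= !inE !xpair_eqE !NE !andbF.
have loopless : all (fun pr => pr.1 != pr.2) changed by rewrite /= !NE.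
have sym' := reattach_sym u0 x sym.
have := M2_local uniq_changed pair_weight_reattach_unchanged.
rewrite !big_pair_weight_both_orders //.
have e'12 : e' u1 u2 by rewrite reattach_off // eq_sym.
have e'xv : e' x v by rewrite reattach_off.
rewrite !big_cons !big_nil /edge_weight /= !deg_reattach_pendent !NE !eqxx.
rewrite !reattach_at (leaf_nbrE du0 e01 x) !NE e01 e12 exv e'12 e'xv du0 du1 dx eqxx.
rewrite -[nat_of_bool true]/1 -[nat_of_bool false]/0 !mul1n !mul0n !add0n !addn0.
by move: (M2 e) (M2 e') (deg e u2) (deg e v) => A B c d; clear; lia.
Qed.
End ReattachPendent.

Lemma long_pendent_path_head (n : nat) (e : rel 'I_n) u0 p :
  pendent_path e u0 p -> 2 < size p ->
  exists u1 u2, [/\ e u0 u1, e u1 u2, uniq [:: u0; u1; u2], deg e u1 = 2 & deg e u2 = 2].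
Proof.
case: p => [|u1 [|u2 [|u3 q]]] // [[_ /= /and3P[e01 e12 _] up _ _]].
move=> /= /and3P[/eqP du1 /eqP du2 _] _.
have u012 : uniq [:: u0; u1; u2].
  by apply: (subseq_uniq _ (up : uniq [:: u0, u1, u2, u3 & q])); rewrite /= !eqxx.
by exists u1, u2.
Qed.

Theorem lemma12 (n b : nat) (e : rel 'I_n) :
  1 <= b -> 2 * (b + 1) < n ->
  in_CTstar b e ->
  (forall e' : rel 'I_n, in_CTstar b e' -> M2 e' <= M2 e) ->
  (exists u v : 'I_n, [/\ deg e u = 1, 2 < deg e v & e u v]) ->
  forall (u0 : 'I_n) (p : seq 'I_n), pendent_path e u0 p -> size p <= 2.
Proof.
move=> _ _ CT M2_max [x [v [dx dv exv]]] u0 p pp.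
have [[[sym _] _] _] := CT; have [[_ _ _ du0 _] _] := pp.
rewrite leqNgt; apply/negP => /(long_pendent_path_head pp)[u1 [u2 [e01 e12 u012 du1 du2]]].
have neq_deg a c : deg e a != deg e c -> a != c by apply: contraNneq => ->.
have xu0 : x != u0.
  apply/eqP=> xu0; move: exv; rewrite xu0 (leaf_nbrE du0 e01) => /eqP vu1.
  by rewrite vu1 du1 in dv.
have xu1 : x != u1 by apply: neq_deg; rewrite dx du1.
have u2_new : u2 \notin [:: u0; u1; x].
  move: u012; rewrite /= !inE !negb_or => /andP[/andP[_ u02] /andP[u12 _]].
  by rewrite ![u2 == _]eq_sym u02 u12 neq_deg // du2 dx.
have v_new : v \notin [:: u0; u1; x].
  by rewrite !inE !negb_or !neq_deg // ?du0 ?du1 ?dx; move: dv; case: (deg e v) => [|[|[|]]].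
have := M2_max _ (reattach_CTstar sym du0 e01 du1 dx xu0 xu1 CT).
have := M2_reattach_pendent sym du0 e01 du1 dx xu0 xu1 e12 exv u2_new v_new.
rewrite du2; move: (M2 (reattach e u0 x)) (M2 e) (deg e v) dv => A B d; lia.
Qed.
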